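(* Let $W$ be an eventually periodic subset of $\mathbb{Z}^d$ with periods $u_1,\dots,u_d$, and let $\mathscr{W},\mathcal{W},\mathscr{W}_1$ be as defined in the context. Let $M$ be a minimal complement of $W$ in $\mathbb{Z}^d$. Let $M_\infty$ be the union of those fibres $M_{\bar v}$ ($\bar v\in\mathbb{Z}^d/\mathcal{L}$) such that for every real $N$ there exists $x\in M_{\bar v}$ all of whose coordinates with respect to $u_1,\dots,u_d$ are $\leqslant N$. Let $\mathcal{M}\subseteq M_\infty$ be such that $\pi$ restricts to a bijection $\mathcal{M}\to\pi(M_\infty)$. Then: (1) $M_\infty$ is infinite, $\mathcal{M}$ is a nonempty finite set, $\mathscr{W}_1$ is nonempty, and $\pi(\mathcal{M}+(\mathcal{W}\cup\mathscr{W}_1))=\mathbb{Z}^d/\mathcal{L}$. (2) For every $m\in\mathcal{M}$ there exists $w\in\mathscr{W}_1$ such that $m+w\not\equiv m'+w'\pmod{\mathcal{L}}$ for all $m'\in\mathcal{M}$ and all $w'\in\mathcal{W}$.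
   Context: $d\geqslant1$, $\mathbb{N}=\{0,1,2,\dots\}$. Let $u_1,\dots,u_d\in\mathbb{Z}^d$ satisfy no nontrivial $\mathbb{Z}$-linear relation, $\mathcal{L}=\mathbb{Z}u_1+\dots+\mathbb{Z}u_d$, $P=\mathbb{N}u_1+\dots+\mathbb{N}u_d$, $\pi:\mathbb{Z}^d\to\mathbb{Z}^d/\mathcal{L}$ the quotient map, and $X_{\bar v}=X\cap\pi^{-1}(\bar v)$. Coordinates of $x\in\mathbb{Z}^d$ with respect to $u_1,\dots,u_d$ are the unique $t_i\in\mathbb{Q}$ with $x=\sum t_iu_i$. A nonempty $X\subseteq\mathbb{Z}^d$ is eventually periodic with periods $u_1,\dots,u_d$ if $X\subseteq F+P$ for some nonempty finite $F\subseteq\mathbb{Z}^d$ and $x+P\subseteq X$ for all but finitely many $x\in X$. For such $W$: $\mathscr{W}=\{w\in W:w+P\not\subseteq W\}$; $\mathcal{W}=\{w\in W\setminus\mathscr{W}:(w-P)\cap(W\setminus\mathscr{W})=\{w\}\}$; $\mathscr{W}_1$ is the set of elements of $\mathscr{W}$ congruent modulo $\mathcal{L}$ to no element of $\mathcal{W}$. A nonempty $M\subseteq\mathbb{Z}^d$ is a complement of $W$ if $M+W=\mathbb{Z}^d$, and a minimal complement if no proper subset of $M$ is a complement of $W$. *)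

From mathcomp Require Import all_boot all_order all_algebra.
Set Implicit Arguments. Unset Strict Implicit. Unset Printing Implicit Defensive.
Import Order.TTheory GRing.Theory Num.Theory.
Local Open Scope ring_scope.

Notation vec d := 'rV[int]_d.
Definition vset (d : nat) := vec d -> Prop.

Section Defs.
Variables (d : nat) (u : 'I_d -> vec d).

Definition Zindep : Prop :=
  forall c : 'I_d -> int, \sum_(i < d) u i *~ c i = 0 -> forall i, c i = 0.

Definition inL (x : vec d) : Prop :=
  exists c : 'I_d -> int, x = \sum_(i < d) u i *~ c i.

Definition inP (x : vec d) : Prop :=
  exists c : 'I_d -> nat, x = \sum_(i < d) u i *+ c i.

(* congruence modulo L, i.e. pi x = pi y *)
Definition congL (x y : vec d) : Prop := inL (x - y).

Definition toQ (x : vec d) : 'rV[rat]_d := map_mx (fun z : int => z%:~R) x.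

Definition coords_le (x : vec d) (N : rat) : Prop :=
  exists t : 'I_d -> rat,
    toQ x = \sum_(i < d) t i *: toQ (u i) /\ forall i, t i <= N.

Definition finite_set (A : vset d) : Prop :=
  exists s : seq (vec d), forall x, A x -> x \in s.

Definition nonempty (A : vset d) : Prop := exists x, A x.

Definition eventually_periodic (X : vset d) : Prop :=
  nonempty X /\
  (exists F : vset d, nonempty F /\ finite_set F /\
     forall x, X x -> exists f p, F f /\ inP p /\ x = f + p) /\
  finite_set (fun x => X x /\ ~ (forall p, inP p -> X (x + p))).

Definition Wscr (W : vset d) (w : vec d) : Prop :=
  W w /\ ~ (forall p, inP p -> W (w + p)).

Definition Wcal (W : vset d) (w : vec d) : Prop :=
  (W w /\ ~ Wscr W w) /\
  forall y, (W y /\ ~ Wscr W y) -> inP (w - y) -> y = w.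

Definition Wscr1 (W : vset d) (w : vec d) : Prop :=
  Wscr W w /\ forall w', Wcal W w' -> ~ congL w w'.

Definition is_complement (M W : vset d) : Prop :=
  nonempty M /\ forall z, exists m w, M m /\ W w /\ z = m + w.

Definition minimal_complement (M W : vset d) : Prop :=
  is_complement M W /\
  forall M' : vset d, (forall x, M' x -> M x) -> (exists x, M x /\ ~ M' x) ->
    ~ is_complement M' W.

Definition Minf (M : vset d) (x : vec d) : Prop :=
  M x /\ forall N : rat, exists y, M y /\ congL y x /\ coords_le y N.

End Defs.

From mathcomp Require Import all_boot all_order all_algebra.
From Stdlib Require Import Classical.
From mathcomp Require Import lra.
Set Implicit Arguments. Unset Strict Implicit. Unset Printing Implicit Defensive.
Import Order.TTheory GRing.Theory Num.Theory.
Local Open Scope ring_scope.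

(* Coordinates with respect to u_1, ..., u_d are given by Cramer's rule, so L has
   finite index in Z^d (whence Mc is finite) and P is the set of lattice points
   with nonnegative coordinates; as W is contained in F + P, coordinates are
   bounded below on W.  Decomposing z - K (u_1 + ... + u_d) = m + w for larger
   and larger K, the finiteness of F forces infinitely many of the m into one
   class modulo L, with coordinates tending to -oo: every z is congruent to some
   m + w with m in M_oo and w in W, and M_oo, whose fibres are unbounded below,
   is infinite.  Since W \ Wscr descends along P onto Wcal, every element of W
   is congruent to one of Wcal or Wscr1, which gives the covering in (1).
   For (2), suppose every m + w with w in Wscr1 were congruent to some m' + w'
   with m' in M_oo and w' in Wcal.  The fibre of m' in M is unbounded below, so
   m + w would equal y + (w' + p) with y in M \ {m}, p in P and w' + p in W;
   hence M \ {m} would still be a complement of W. *)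

Section Coordinates.
Variables (d : nat) (u : 'I_d -> vec d).
Hypothesis hu : Zindep u.

Definition basis_mx : 'M[int]_d := \matrix_i u i.

(* Cramer's rule for x = \sum_i t_i u_i. *)
Definition coord (x : vec d) (i : 'I_d) : rat :=
  ((\det basis_mx)%:~R^-1 *: toQ (x *m \adj basis_mx)) 0 i.

Lemma toQ_inj : injective (@toQ d).
Proof.
by move=> x y /rowP exy; apply/rowP => j; move: (exy j); rewrite !mxE => /intr_inj.
Qed.

Lemma toQ_mulz (x : vec d) (c : int) : toQ (x *~ c) = c%:~R *: toQ x.
Proof. by apply/rowP => j; rewrite -scaler_int !mxE intz intrM. Qed.

Lemma toQ_sum_mulz (c : 'I_d -> int) :
  toQ (\sum_i u i *~ c i) = \sum_i (c i)%:~R *: toQ (u i).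
Proof. by rewrite [LHS]map_mx_sum; apply: eq_bigr => i _; apply: toQ_mulz. Qed.

Lemma mul_basis_mx (v : 'rV[rat]_d) :
  v *m map_mx intr basis_mx = \sum_i v 0 i *: toQ (u i).
Proof. by rewrite mulmx_sum_row; apply: eq_bigr => i _; rewrite -map_row rowK. Qed.

Lemma Zindep_rat (t : 'I_d -> rat) : \sum_i t i *: toQ (u i) = 0 -> forall i, t i = 0.
Proof.
move=> sum0.
pose D : int := \prod_j denq (t j).
pose c i : int := numq (t i) * \prod_(j | j != i) denq (t j).
have cE i : (c i)%:~R = t i * D%:~R.
  by rewrite /c /D [X in _ = _ * X%:~R](bigD1 i) //= !intrM numqE mulrA.
have D_neq0 : D%:~R != 0 :> rat.
  by rewrite intr_eq0; apply/prodf_neq0 => j _; rewrite denq_neq0.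
have /hu c0 : \sum_i u i *~ c i = 0.
  apply: toQ_inj; rewrite toQ_sum_mulz /toQ map_mx0.
  under eq_bigr => i _ do rewrite cE mulrC -scalerA.
  by rewrite -scaler_sumr sum0 scaler0.
by move=> i; apply: (mulIf D_neq0); rewrite -cE c0 mul0r.
Qed.

Lemma det_basis_neq0 : \det basis_mx != 0.
Proof.
apply/negP => /eqP det0.
have /det0P [v v_neq0] : \det (map_mx intr basis_mx) == 0 :> rat.
  by rewrite det_map_mx det0 rmorph0.
rewrite mul_basis_mx => /Zindep_rat v0.
by case/eqP: v_neq0; apply/rowP => j; rewrite v0 mxE.
Qed.

Lemma coordE x : toQ x = \sum_i coord x i *: toQ (u i).
Proof.
transitivity ((\row_i coord x i) *m map_mx intr basis_mx); last first.
  by rewrite mul_basis_mx; apply: eq_bigr => i _; rewrite mxE.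
have -> : \row_i coord x i = (\det basis_mx)%:~R^-1 *: toQ (x *m \adj basis_mx).
  by apply/rowP => j; rewrite mxE.
rewrite -scalemxAl /toQ -map_mxM -mulmxA mul_adj_mx mul_mx_scalar map_mxZ scalerA.
by rewrite mulVf ?scale1r // intr_eq0 det_basis_neq0.
Qed.

Lemma coord_unique x (t : 'I_d -> rat) :
  toQ x = \sum_i t i *: toQ (u i) -> t =1 coord x.
Proof.
move=> xt i; apply/eqP; rewrite -subr_eq0; apply/eqP; move: i.
apply: Zindep_rat; under eq_bigr do rewrite scalerBl.
by rewrite sumrB -xt -coordE subrr.
Qed.

Lemma coords_leP x N : coords_le u x N <-> forall i, coord x i <= N.
Proof.
split=> [[t [/coord_unique xt tN]] i | x_le]; first by rewrite -xt.
by exists (coord x); split=> //; apply: coordE.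
Qed.

Lemma coordD x y i : coord (x + y) i = coord x i + coord y i.
Proof. by rewrite /coord mulmxDl /toQ map_mxD scalerDr mxE. Qed.

Lemma coordN x i : coord (- x) i = - coord x i.
Proof. by rewrite /coord mulNmx /toQ map_mxN scalerN mxE. Qed.

Lemma coord0 i : coord 0 i = 0.
Proof. by rewrite /coord mul0mx /toQ map_mx0 scaler0 mxE. Qed.

Lemma coordB x y i : coord (x - y) i = coord x i - coord y i.
Proof. by rewrite coordD coordN. Qed.

Lemma coord_sum_mulz (c : 'I_d -> int) i : coord (\sum_j u j *~ c j) i = (c i)%:~R.
Proof.
by symmetry; apply: (coord_unique (t := fun j => (c j)%:~R)); rewrite toQ_sum_mulz.
Qed.

Lemma coord_sum_muln (c : 'I_d -> nat) i : coord (\sum_j u j *+ c j) i = (c i)%:R.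
Proof. exact: (coord_sum_mulz (fun j => (c j)%:Z)). Qed.

End Coordinates.

Section Lattice.
Variables (d : nat) (u : 'I_d -> vec d).
Hypothesis hu : Zindep u.

Lemma inL0 : inL u 0.
Proof. by exists (fun=> 0); rewrite big1 // => i _; rewrite mulr0z. Qed.

Lemma inLD x y : inL u x -> inL u y -> inL u (x + y).
Proof.
move=> [c ->] [c' ->]; exists (fun i => c i + c' i).
by rewrite -big_split; apply: eq_bigr => i _; rewrite mulrzDr.
Qed.

Lemma inLN x : inL u x -> inL u (- x).
Proof.
move=> [c ->]; exists (fun i => - c i).
by rewrite -sumrN; apply: eq_bigr => i _; rewrite mulrNz.
Qed.

Lemma inPD x y : inP u x -> inP u y -> inP u (x + y).
Proof.
move=> [c ->] [c' ->]; exists (fun i => c i + c' i)%N.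
by rewrite -big_split; apply: eq_bigr => i _; rewrite mulrnDr.
Qed.

Lemma inP_inL x : inP u x -> inL u x.
Proof. by move=> [c ->]; exists (fun i => (c i)%:Z). Qed.

Lemma coord_inP_ge0 x i : inP u x -> 0 <= coord u x i.
Proof. by move=> [c ->]; rewrite (coord_sum_muln hu) ler0n. Qed.

Lemma inL_coord_ge0 x : inL u x -> (forall i, 0 <= coord u x i) -> inP u x.
Proof.
move=> [c ->] c_ge0; exists (fun i => absz (c i)); apply: eq_bigr => i _.
by rewrite pmulrn gez0_abs // -(ler0z rat) -(coord_sum_mulz hu).
Qed.

Lemma congL_refl x : congL u x x.
Proof. by rewrite /congL subrr; apply: inL0. Qed.

Lemma congL_sym x y : congL u x y -> congL u y x.
Proof. by move/inLN; rewrite opprB. Qed.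

Lemma congL_trans x y z : congL u x y -> congL u y z -> congL u x z.
Proof. by move=> xy /(inLD xy); rewrite addrA subrK. Qed.

Lemma congLD x y x' y' : congL u x y -> congL u x' y' -> congL u (x + x') (y + y').
Proof. by move=> xy /(inLD xy); rewrite /congL opprD addrACA. Qed.

Lemma congLN x y : congL u x y -> congL u (- x) (- y).
Proof. by move=> xy; rewrite /congL -opprD; apply: inLN. Qed.

Lemma congLB x y x' y' : congL u x y -> congL u x' y' -> congL u (x - x') (y - y').
Proof. by move=> xy /congLN; apply: congLD. Qed.

Lemma inP_congL x y : inP u (x - y) -> congL u x y.
Proof. exact: inP_inL. Qed.

Lemma inL_mulz_det y : inL u (y *~ \det (basis_mx u)).
Proof.
exists ((y *m \adj (basis_mx u)) 0); rewrite -scaler_int intz -mul_mx_scalar -mul_adj_mx.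
rewrite mulmxA mulmx_sum_row; apply: eq_bigr => i _.
by rewrite rowK -[X in X *: _]intz scaler_int.
Qed.

Lemma congL_finite_index :
  exists R : seq (vec d), forall x, exists2 r, r \in R & congL u x r.
Proof.
pose D := \det (basis_mx u).
exists [seq \row_j (k j : nat)%:Z | k : {ffun 'I_d -> 'I_`|D|} <- enum {ffun _ -> _}] => x.
have D_neq0 : D != 0 := det_basis_neq0 hu.
have lt_mod j : (absz (modz (x ord0 j) D) < absz D)%N.
  by rewrite -ltz_nat gez0_abs ?ltz_mod ?modz_ge0.
exists (\row_j modz (x 0 j) D).
  apply/mapP; exists [ffun j => Ordinal (lt_mod j)]; first by rewrite mem_enum.
  by apply/rowP => j; rewrite !mxE ffunE /= gez0_abs ?modz_ge0.
rewrite /congL; set r := \row_j _.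
have -> : x - r = (\row_j divz (x 0 j) D) *~ D.
  by apply/rowP => j; rewrite -scaler_int intz !mxE {1}(divz_eq (x 0 j) D) mulrC addrK.
exact: inL_mulz_det.
Qed.

Lemma congL_finite_transversal (A : vset d) :
  (forall m m', A m -> A m' -> congL u m m' -> m = m') -> finite_set A.
Proof.
move=> A_inj; have [R R_index] := congL_finite_index.
suff [s As] : exists s : seq (vec d),
    forall m, A m -> (exists2 r, r \in R & congL u m r) -> m \in s.
  by exists s => m Am; apply: As Am (R_index m).
elim: R {R_index} => [|r R [s As]]; first by exists [::] => m _ [].
have [[a [Aa ar]] | no_a] := classic (exists a, A a /\ congL u a r); last first.
  exists s => m Am [r']; rewrite in_cons => /predU1P [-> mr|r'R mr'].
    by case: no_a; exists m.
  by apply: As => //; exists r'.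
exists (a :: s) => m Am [r']; rewrite in_cons => /predU1P [-> mr|r'R mr'].
  by rewrite (A_inj m a) ?mem_head //; apply: congL_trans mr (congL_sym ar).
by rewrite in_cons As ?orbT //; exists r'.
Qed.

End Lattice.

Lemma seq_lower_bound (T : eqType) (s : seq T) (g : T -> rat) :
  exists N, forall x, x \in s -> N <= g x.
Proof.
elim: s => [|a s [N N_lb]]; first by exists 0.
exists (Num.min (g a) N) => x; rewrite in_cons => /predU1P [->|/N_lb].
  by rewrite ge_min lexx.
by apply: le_trans; rewrite ge_min lexx orbT.
Qed.

Lemma fin_lower_bound (I : finType) (g : I -> rat) : exists N, forall i, N <= g i.
Proof.
by have [N N_lb] := seq_lower_bound (enum I) g; exists N => i; rewrite N_lb ?mem_enum.
Qed.

Lemma exists_nat_ge (x : rat) : exists n : nat, x <= n%:R.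
Proof. by exists (Num.bound `|x|); rewrite (le_trans (ler_norm x)) // ltW // archi_boundP. Qed.

Lemma exists_max_nat (S : nat -> Prop) (B : nat) :
  (exists n, S n) -> (forall n, S n -> (n <= B)%N) ->
  exists2 n, S n & forall m, S m -> (m <= n)%N.
Proof.
elim: B => [|B IH] [n Sn] S_le; first by exists n => // m /S_le /leq_trans; apply.
have [SB|nSB] := classic (S B.+1); first by exists B.+1.
apply: IH => [|m Sm]; first by exists n.
have := S_le m Sm; rewrite leq_eqVlt => /predU1P [mB|//].
by case: nSB; rewrite -mB.
Qed.

Lemma pigeonhole_antitone (T : eqType) (s : seq T) (P : nat -> T -> Prop) :
  (forall x n m, (m <= n)%N -> P n x -> P m x) ->
  (forall n, exists2 x, x \in s & P n x) -> exists2 x, x \in s & forall n, P n x.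
Proof.
elim: s P => [|a s IH] P P_anti P_ex; first by case: (P_ex 0%N).
have [Pa|] := classic (forall n, P n a); first by exists a; rewrite ?mem_head.
move=> /not_all_ex_not [n0 nPa].
have [x xs Px] : exists2 x, x \in s & forall n, P (n + n0)%N x.
  apply: IH => [x n m mn|n]; first by apply: P_anti; rewrite leq_add2r.
  have [x] := P_ex (n + n0)%N; rewrite in_cons => /predU1P [->|xs] Px; last by exists x.
  by case: nPa; apply: P_anti Px; rewrite leq_addl.
by exists x => [|n]; [rewrite in_cons xs orbT | apply: P_anti (Px n); rewrite leq_addr].
Qed.

Section PeriodicSet.
Variables (d : nat) (u : 'I_d -> vec d) (W : vset d).
Hypothesis hu : Zindep u.
Hypothesis hW : eventually_periodic u W.

Lemma not_Wscr_shift x p :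
  W x -> ~ Wscr u W x -> inP u p -> W (x + p) /\ ~ Wscr u W (x + p).
Proof.
move=> Wx nWx Pp.
have Wx_P q : inP u q -> W (x + q).
  by move=> Pq; apply: NNPP => nWxq; apply: nWx; split=> // xP; apply/nWxq/xP.
split; first exact: Wx_P.
by case=> _; apply=> q Pq; rewrite -addrA; apply/Wx_P/inPD.
Qed.

Lemma periodic_decomposition : exists (F : seq (vec d)) (N : rat),
  (forall f i, f \in F -> N <= coord u f i) /\
  (forall x, W x -> exists2 f, f \in F & inP u (x - f)).
Proof.
have [_ [[F0 [_ [[F F0_F] W_dec]]] _]] := hW.
have [N N_lb] := seq_lower_bound [seq (f, i) | f <- F, i <- enum 'I_d]
                                 (fun fi => coord u fi.1 fi.2).
exists F, N; split=> [f i fF | x /W_dec [f [p [F0f [Pp ->]]]]].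
  by apply: (N_lb (f, i)); rewrite allpairs_f ?mem_enum.
by exists f; [apply: F0_F | rewrite addrC addKr].
Qed.

Lemma periodic_coord_lb : exists N, forall x i, W x -> N <= coord u x i.
Proof.
have [F [N [F_lb W_dec]]] := periodic_decomposition.
exists N => x i /W_dec [f fF Pxf].
by rewrite -(subrK f x) coordD -[N]add0r lerD ?F_lb ?(coord_inP_ge0 hu).
Qed.

Lemma descent_Wcal w : W w -> ~ Wscr u W w -> exists2 y, Wcal u W y & inP u (w - y).
Proof.
(* Take c with \sum_i c_i maximal; the lower bound on coordinates over W bounds it. *)
move=> Ww nWw; have [N N_lb] := periodic_coord_lb.
pose y (c : 'I_d -> nat) := w - \sum_i u i *+ c i.
pose S n := exists2 c, (\sum_i c i)%N = n & W (y c) /\ ~ Wscr u W (y c).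
have [B B_ge] := exists_nat_ge (\sum_i (coord u w i - N)).
have S0 : S 0%N.
  by exists (fun=> 0%N); rewrite ?big1 // /y big1 ?subr0.
have S_le n : S n -> (n <= B)%N.
  move=> [c <- [Wc _]]; rewrite -(ler_nat rat) natr_sum (le_trans _ B_ge) //.
  apply: ler_sum => i _; move: (N_lb _ i Wc); rewrite coordB (coord_sum_muln hu); lra.
have [_ [c <- [Wc nWc]] c_max] := exists_max_nat (ex_intro _ _ S0) S_le.
exists (y c); last by exists c; rewrite /y opprB addrC subrK.
split=> // y' [Wy' nWy'] [c' yy'].
have y'E : y' = y c - \sum_i u i *+ c' i by rewrite -yy' opprB subrKC.
have /c_max : S (\sum_i c i + \sum_i c' i)%N.
  exists (fun i => c i + c' i)%N; first by rewrite big_split.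
  suff -> : y (fun i => c i + c' i)%N = y' by [].
  rewrite y'E /y -addrA -opprD -big_split; congr (w - _).
  by apply: eq_bigr => i _; rewrite mulrnDr.
rewrite -{2}[\sum_i c i]addn0 leq_add2l leqn0 sum_nat_eq0 => /forallP c'0.
by rewrite y'E big1 ?subr0 // => i _; rewrite (eqP (c'0 i)).
Qed.

Lemma Wscr_congr_Wcal w :
  Wscr u W w -> ~ Wscr1 u W w -> exists2 w', Wcal u W w' & congL u w w'.
Proof.
move=> Sw nS1w; apply: NNPP => no_w'; apply: nS1w; split=> // w' w'_cal ww'.
by apply: no_w'; exists w'.
Qed.

Lemma W_congr_Wcal_or_Wscr1 w :
  W w -> exists w', (Wcal u W w' \/ Wscr1 u W w') /\ congL u w w'.
Proof.
move=> Ww; have [Sw|nSw] := classic (Wscr u W w).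
  have [S1w|/(Wscr_congr_Wcal Sw) [w' w'_cal ww']] := classic (Wscr1 u W w).
    by exists w; split; [right | apply: congL_refl].
  by exists w'; split; first left.
have [y y_cal Pwy] := descent_Wcal Ww nSw.
by exists y; split; [left | apply: inP_inL].
Qed.

End PeriodicSet.

Section MinimalComplement.
Variables (d : nat) (u : 'I_d -> vec d) (W M : vset d).
Hypothesis hd : (0 < d)%N.
Hypothesis hu : Zindep u.
Hypothesis hW : eventually_periodic u W.
Hypothesis hM : minimal_complement M W.

Lemma Minf_congr x y : Minf u M x -> M y -> congL u y x -> Minf u M y.
Proof.
move=> [_ x_deep] My yx; split=> // N.
have [z [Mz [zx zN]]] := x_deep N.
by exists z; split=> //; split=> //; apply: congL_trans zx (congL_sym yx).
Qed.

Lemma Minf_below x (a : 'I_d -> rat) : Minf u M x ->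
  exists y, M y /\ congL u y x /\ forall i, coord u y i <= a i.
Proof.
move=> [_ x_deep]; have [N N_lb] := fin_lower_bound a.
have [y [My [yx /(coords_leP hu) y_le]]] := x_deep N.
by exists y; split=> //; split=> // i; apply: le_trans (y_le i) (N_lb i).
Qed.

Lemma Minf_strict_below x v : Minf u M x -> congL u v x ->
  exists y p, M y /\ inP u p /\ p != 0 /\ v = y + p.
Proof.
move=> x_inf vx.
have [y [My [yx y_lt]]] := Minf_below (fun i => coord u v i - 1) x_inf.
have coord_vy i : 1 <= coord u (v - y) i by rewrite coordB; move: (y_lt i); lra.
exists y, (v - y); split=> //; split; last split; last by rewrite subrKC.
- apply: (inL_coord_ge0 hu); first exact: congL_trans vx (congL_sym yx).
  by move=> i; apply: le_trans (coord_vy i).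
- by apply/eqP => vy0; move: (coord_vy (Ordinal hd)); rewrite vy0 coord0.
Qed.

Lemma Minf_complement z : exists m w, Minf u M m /\ W w /\ congL u z (m + w).
Proof.
(* For each n, write z - K (u_1 + ... + u_d) = m + w with K so large that the
   coordinates of m are <= -n, and w in f + P for some f in F; one f serves for
   all n, and the corresponding m are all congruent to z - f. *)
have [F [NF [F_lb W_dec]]] := periodic_decomposition hW.
have [[_ M_compl] _] := hM.
pose P n f := exists m w, M m /\ W w /\ inP u (w - f) /\ congL u z (m + w) /\
  forall i, coord u m i <= - n%:R.
have [f fF f_deep] : exists2 f, f \in F & forall n, P n f.
  apply: pigeonhole_antitone => [f n k kn [m [w [Mm [Ww [wf [zmw m_le]]]]]] | n].
    exists m, w; do 4!split=> //; move=> i; apply: le_trans (m_le i) _.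
    by rewrite lerN2 ler_nat.
  have [Cz Cz_le] := fin_lower_bound (fun i => - coord u z i).
  have [K K_ge] := exists_nat_ge (n%:R - NF - Cz).
  have [m [w [Mm [Ww zE]]]] := M_compl (z - \sum_i u i *+ K).
  have [f fF wf] := W_dec w Ww.
  exists f => //; exists m, w; do 3!split=> //; split.
    by rewrite /congL -zE opprB subrKC; apply: inP_inL; exists (fun=> K).
  move=> i; move: (congr1 (coord u ^~ i) zE) (F_lb f i fF).
  move: (coord_inP_ge0 hu i wf) (Cz_le i).
  rewrite /= !(coordB, coordD, coordN) (coord_sum_muln hu (fun=> K)) /=; lra.
have [m0 [w0 [Mm0 [Ww0 [w0f [zc _]]]]]] := f_deep 0%N.
exists m0, w0; split=> //; split=> // N.
have [n n_ge] := exists_nat_ge (- N).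
have [m [w [Mm [Ww [wf [zmw m_le]]]]]] := f_deep n.
exists m; split=> //; split; last by apply/(coords_leP hu) => i; move: (m_le i); lra.
have ww0 : congL u w w0 := congL_trans (inP_congL wf) (congL_sym (inP_congL w0f)).
by move: (congLB (congL_trans (congL_sym zmw) zc) ww0); rewrite !addrK.
Qed.

Lemma Minf_infinite : ~ finite_set (Minf u M).
Proof.
move=> [s s_Minf]; pose i0 := Ordinal hd.
have [N N_lb] := seq_lower_bound s (coord u ^~ i0).
have [m [w [m_inf _]]] := Minf_complement 0.
have [y [My [ym y_lt]]] := Minf_below (fun=> N - 1) m_inf.
by move: (N_lb y (s_Minf y (Minf_congr m_inf My ym))) (y_lt i0); lra.
Qed.

Lemma complement_without m :
  Minf u M m ->
  (forall w, Wscr1 u W w -> exists m' w',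
     Minf u M m' /\ Wcal u W w' /\ congL u (m + w) (m' + w')) ->
  is_complement (fun x => M x /\ x <> m) W.
Proof.
move=> m_inf Wscr1_covered; have [[_ M_compl] _] := hM.
have [m1 [p1 [Mm1 [Pp1 [p1_neq0 mE]]]]] := Minf_strict_below m_inf (congL_refl u m).
have m1_neq : m1 <> m.
  by move=> m1m; case/eqP: p1_neq0; apply: (@addrI _ m); rewrite addr0 {2}mE m1m.
split; first by exists m1.
move=> z; have [m0 [w0 [Mm0 [Ww0 ->]]]] := M_compl z.
have [->|m0_neq] := classic (m0 = m); last by exists m0, w0.
have [Sw0|nSw0] := classic (Wscr u W w0); last first.
  have [Ww0p _] := not_Wscr_shift Ww0 nSw0 Pp1.
  by exists m1, (w0 + p1); do 2!split=> //; rewrite mE addrAC -addrA.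
have [m' [w' [m'_inf [w'_cal mw0]]]] : exists m' w',
    Minf u M m' /\ Wcal u W w' /\ congL u (m + w0) (m' + w').
  have [/Wscr1_covered //|nS1w0] := classic (Wscr1 u W w0).
  have [w' w'_cal w0w'] := Wscr_congr_Wcal Sw0 nS1w0.
  by exists m, w'; do 2!split=> //; apply: congLD (congL_refl u m) w0w'.
have [[Ww' nSw'] _] := w'_cal.
have [|y [p [My [Pp [_ E]]]]] := Minf_strict_below m'_inf (v := m + w0 - w').
  by move: (congLB mw0 (congL_refl u w')); rewrite addrK.
have [Ww'p nSw'p] := not_Wscr_shift Ww' nSw' Pp.
have E' : m + w0 = y + (w' + p) by rewrite addrCA -E subrKC.
exists y, (w' + p); do 2!split=> //.
move=> ym; apply: nSw'p; suff <- : w0 = w' + p by [].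
by apply: (addrI m); rewrite E' ym.
Qed.

Lemma Minf_Wscr1_witness m : Minf u M m ->
  exists w, Wscr1 u W w /\
    forall m' w', Minf u M m' -> Wcal u W w' -> ~ congL u (m + w) (m' + w').
Proof.
move=> m_inf; apply: NNPP => no_w; have [_ M_min] := hM.
apply: (M_min (fun x => M x /\ x <> m)) => [x []//||].
  by exists m; split=> [|[]//]; case: m_inf.
apply: complement_without => // w S1w; apply: NNPP => no_m'; apply: no_w.
by exists w; split=> // m' w' m'_inf w'_cal mw; apply: no_m'; exists m', w'.
Qed.

End MinimalComplement.

Theorem theorem4p9 (d : nat) (hd : (0 < d)%N) (u : 'I_d -> vec d)
  (hu : Zindep u) (W M Mc : vset d)
  (hW : eventually_periodic u W)
  (hM : minimal_complement M W)
  (hMc_sub : forall m, Mc m -> Minf u M m)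
  (hMc_inj : forall m m', Mc m -> Mc m' -> congL u m m' -> m = m')
  (hMc_surj : forall x, Minf u M x -> exists m, Mc m /\ congL u m x) :
  (~ finite_set (Minf u M) /\
   (nonempty Mc /\ finite_set Mc) /\
   nonempty (Wscr1 u W) /\
   (forall z : vec d, exists m w, Mc m /\ (Wcal u W w \/ Wscr1 u W w) /\
                                  congL u z (m + w))) /\
  (forall m, Mc m -> exists w, Wscr1 u W w /\
     forall m' w', Mc m' -> Wcal u W w' -> ~ congL u (m + w) (m' + w')).
Proof.
have Mc_witness m : Mc m -> exists w, Wscr1 u W w /\
    forall m' w', Mc m' -> Wcal u W w' -> ~ congL u (m + w) (m' + w').
  move=> /hMc_sub /(Minf_Wscr1_witness hd hu hM) [w [S1w no_congr]].
  by exists w; split=> // m' w' /hMc_sub; apply: no_congr.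
split; last exact: Mc_witness.
have [m0 [_ [m0_inf _]]] := Minf_complement hu hW hM 0.
have [mc [Mc_mc _]] := hMc_surj m0 m0_inf.
split; first exact: Minf_infinite hd hu hW hM.
split; first by split; [exists mc | exact: (congL_finite_transversal hu hMc_inj)].
split; first by have [w [S1w _]] := Mc_witness mc Mc_mc; exists w.
move=> z; have [m [w [m_inf [Ww zc]]]] := Minf_complement hu hW hM z.
have [mc' [Mc_mc' mc'm]] := hMc_surj m m_inf.
have [w' [w'_cal ww']] := W_congr_Wcal_or_Wscr1 hu hW Ww.
exists mc', w'; do 2!split=> //.
exact: congL_trans zc (congLD (congL_sym mc'm) ww').
Qed.
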